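(* Let $n,d,\ell\ge1$ be integers, $k$ an even positive integer, and $\mathcal{Q}$ a partition of $\mathcal{I}=\{(j,s): j\in[2\ell], s\in[d]\}$ with $|\mathcal{Q}|$ classes. For any $\mathcal{Q}$-valid collection $\{I_j\}_{j=1}^{2\ell}$ of tuples in $[n]^{kd/2}$, the number of collections $\{\sigma_j\}_{j=1}^{2\ell}$ of permutations in $\mathbb{S}_{kd/2}$ with $\mathrm{Par}(\{I_j\},\{\mathrm{id}\},\{\sigma_j\})=\mathcal{Q}$ is at most $$(kd/2)^{k|\mathcal{Q}|/2}\cdot\prod_{j=1}^{2\ell}\mathrm{hist}(I_j)!.$$
   Context: For a tuple $I=(i_1,\dots,i_q)\in[n]^q$, $\mathrm{hist}(I)=(\alpha_1,\dots,\alpha_n)$ where $\alpha_i$ is the number of times $i$ appears in $I$, and $\mathrm{hist}(I)!:=\prod_{i=1}^n\alpha_i!$ (with $0!=1$). For $\pi\in\mathbb{S}_q$ (permutations of $[q]$), $\pi(I):=(i_{\pi(1)},\dots,i_{\pi(q)})$. A tuple in $[n]^{kd/2}$ is viewed as a concatenation of $d$ consecutive blocks, each in $[n]^{k/2}$. Given $I_1,\dots,I_{2\ell}\in[n]^{kd/2}$ (indices modulo $2\ell$, $I_{2\ell+1}=I_1$) and $\pi_j,\sigma_j\in\mathbb{S}_{kd/2}$, let $A_{j,s}$ be the $s$-th block of $\pi_j(I_j)$ and $B_{j,s}$ the $s$-th block of $\sigma_j(I_{j+1})$. $\mathrm{Par}(\{I_j\},\{\pi_j\},\{\sigma_j\})$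 is the partition of $\mathcal{I}$ into classes of the relation $(j,s)\sim(j',s')$ iff $(A_{j,s},B_{j,s})=(A_{j',s'},B_{j',s'})$ or $(A_{j,s},B_{j,s})=(B_{j',s'},A_{j',s'})$. $\{\mathrm{id}\}$ means all $\pi_j$ equal the identity. A collection $\{I_j\}$ is called $\mathcal{Q}$-valid if there exist $\{\sigma_j\}$ with $\mathrm{Par}(\{I_j\},\{\mathrm{id}\},\{\sigma_j\})=\mathcal{Q}$. *)

From mathcomp Require Import all_boot all_fingroup.
Set Implicit Arguments. Unset Strict Implicit. Unset Printing Implicit Defensive.

Definition histfact (n q : nat) (I : q.-tuple 'I_n) : nat :=
  \prod_(i : 'I_n) (count_mem i I)`!.

Definition permt (n q : nat) (p : 'S_q) (I : q.-tuple 'I_n) : seq 'I_n :=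
  [seq tnth I (p i) | i <- enum 'I_q].

Definition blk (T : Type) (h : nat) (t : seq T) (s : nat) : seq T :=
  take h (drop (s * h) t).

Section Par.
Variables (n k d L : nat).
Let q := (k * d) %/ 2.
Variables (I : 'I_L -> q.-tuple 'I_n) (pi sigma : 'I_L -> 'S_q).

(* A_{j,s}: s-th block of pi_j(I_j) ; B_{j,s}: s-th block of sigma_j(I_{j+1}),
   indices mod L *)
Definition Ablk (x : 'I_L * 'I_d) : seq 'I_n :=
  blk (k %/ 2) (permt (pi x.1) (I x.1)) x.2.
Definition Bblk (x : 'I_L * 'I_d) : seq 'I_n :=
  blk (k %/ 2) (permt (sigma x.1) (I (ordS x.1))) x.2.

Definition par_rel : rel ('I_L * 'I_d) := fun x y =>
  ((Ablk x, Bblk x) == (Ablk y, Bblk y)) || ((Ablk x, Bblk x) == (Bblk y, Ablk y)).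

Definition Par : {set {set 'I_L * 'I_d}} :=
  equivalence_partition par_rel [set: 'I_L * 'I_d].
End Par.

Definition idperms (L q : nat) : 'I_L -> 'S_q := fun _ => 1%g.

Definition Qvalid (n k d L : nat) (Q : {set {set 'I_L * 'I_d}})
  (I : 'I_L -> ((k * d) %/ 2).-tuple 'I_n) : Prop :=
  exists sigma : 'I_L -> 'S_((k * d) %/ 2), Par I (@idperms L _) sigma = Q.

From mathcomp Require Import all_boot all_fingroup.
Set Implicit Arguments. Unset Strict Implicit. Unset Printing Implicit Defensive.

(* Write q = kd/2 = d * h with h = k/2.  We count the families sigma with
   Par({I_j}, {id}, {sigma_j}) = Q through the map sigma |-> words sigma, where
   the j-th word is sigma_j(I_{j+1}), i.e. the position-wise reading of I_{j+1}
   through sigma_j.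
   - Fibres: the permutations p with p(T) equal to a fixed word form a coset of
     the stabiliser of T, which permutes each fibre of T separately; hence a
     fibre of words has at most prod_j hist(I_j)! elements (card_words_fibre).
   - Image: the A-blocks do not depend on sigma, and in a class of Q every
     (A_x, B_x) is the same unordered pair, so B_x is the partner of A_x and is
     determined by the B-block of one representative of the class.  Each such
     block consists of h letters of a tuple of length q: at most q^h choices per
     class, so at most q^(h|Q|) = q^(k|Q|/2) words (card_words_image).
   The theorem is the product of the two bounds (card_le_image_fibre). *)

Section FibrePermutations.
Local Open Scope group_scope.
Local Open Scope action_scope.

(* Permutations of a finite set D that preserve the fibres of f : D -> Y are
   products of permutations of the individual fibres. *)
Lemma card_perm_stab (D Y : finType) (f : D -> Y) :
  #|[set r : {perm D} | [forall x, f (r x) == f x]]|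
    <= \prod_(y : Y) #|[set x | f x == y]|`!.
Proof.
set St := [set r : {perm D} | _].
pose fib y := [set x | f x == y].
pose restr (r : {perm D}) := [ffun y => restr_perm (fib y) r].
have fib_stable r y : r \in St -> r \in 'N(fib y | 'P).
  rewrite inE => /forallP r_f; apply/astabsP => x.
  by rewrite !inE /= apermE (eqP (r_f x)).
rewrite -(@card_in_imset _ _ restr); last first.
  move=> r1 r2 r1St r2St /= e; apply/permP => x.
  have x_fib : x \in fib (f x) by rewrite inE.
  move/ffunP/(_ (f x)): e; rewrite !ffunE => /permP/(_ x).
  by rewrite (restr_permE (fib_stable _ _ r1St) x_fib)
             (restr_permE (fib_stable _ _ r2St) x_fib).
have restr_on : restr @: St \subset family (fun y => perm_on (fib y)).
  apply/subsetP => _ /imsetP [r _ ->]; apply/familyP => y.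
  by rewrite ffunE; apply: restr_perm_on.
apply: (leq_trans (subset_leq_card restr_on)).
rewrite card_family /image_mem foldrE big_map big_enum /=.
by apply: leq_prod => y _; rewrite card_perm.
Qed.

(* The permutations p with f o p = g form a coset of the stabiliser above, so
   they are at most as many. *)
Lemma card_perm_fibre (D Y : finType) (f : D -> Y) (g : {ffun D -> Y}) :
  #|[set p : {perm D} | [ffun x => f (p x)] == g]|
    <= \prod_(y : Y) #|[set x | f x == y]|`!.
Proof.
set P := [set p : {perm D} | _].
have [-> | [p0 p0P]] := set_0Vmem P; first by rewrite cards0.
rewrite -(card_imset _ (mulgI p0^-1)).
apply: leq_trans (card_perm_stab f); apply: subset_leq_card.
apply/subsetP => _ /imsetP [p pP ->]; rewrite inE; apply/forallP => x.
move: pP p0P; rewrite !inE => /eqP/ffunP/(_ (p0^-1 x)) fp /eqP/ffunP/(_ (p0^-1 x)).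
by rewrite permM !ffunE permKV -fp ffunE => ->.
Qed.
End FibrePermutations.

Lemma histfactE n q (T : q.-tuple 'I_n) :
  histfact T = \prod_(v : 'I_n) #|[set i | tnth T i == v]|`!.
Proof.
apply: eq_bigr => v _; congr (_ `!).
rewrite -[in LHS](map_tnth_enum T) count_map cardsE cardE /enum_mem size_filter.
by rewrite (@eq_filter _ _ predT) // filter_predT; apply: eq_count => i.
Qed.

Lemma card_le_image_fibre (aT rT : finType) (f : aT -> rT) (A : {set aT}) m :
  (forall y, #|[set x in A | f x == y]| <= m) -> #|A| <= #|f @: A| * m.
Proof.
move=> fibre_le; rewrite -sum1_card (partition_big_imset f) /= -sum_nat_const.
by apply: leq_sum => y _; rewrite sum1dep_card.
Qed.

(* Equality of unordered pairs {u.1, u.2} = {v.1, v.2}; par_rel x y is exactly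
   this relation between the pairs (A_x, B_x) and (A_y, B_y). *)
Definition upair_eq (T : eqType) (u v : T * T) : bool :=
  (u == v) || (u == (v.2, v.1)).

Lemma upair_eq_trans (T : eqType) (u v w : T * T) :
  upair_eq u v -> upair_eq u w -> upair_eq v w.
Proof.
case: u v w => [a b] [c e] [f g].
by rewrite /upair_eq => /orP [/eqP [-> ->] | /eqP [-> ->]]
  /orP [/eqP [-> ->] | /eqP [-> ->]]; rewrite eqxx ?orbT.
Qed.

Lemma upair_eq_other (T : eqType) (a b b' : T) (v : T * T) :
  upair_eq (a, b) v -> upair_eq (a, b') v -> b = b'.
Proof.
case: v => c e; rewrite /upair_eq.
by case/orP => /eqP [e1 e2] /orP [] /eqP [e3 e4]; congruence.
Qed.

Lemma blk_ext (T : Type) (x0 : T) h d (u v : seq T) :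
  size u = d * h -> size v = d * h ->
  (forall s, s < d -> blk h u s = blk h v s) -> u = v.
Proof.
move=> su sv eq_blk; apply: (eq_from_nth (x0 := x0)); first by rewrite su sv.
move=> i; rewrite su => lt_i.
have h_gt0 : 0 < h by case: h lt_i {su sv eq_blk}; rewrite ?muln0.
have lt_s : i %/ h < d by rewrite ltn_divLR.
have := congr1 (fun w => nth x0 w (i %% h)) (eq_blk _ lt_s).
by rewrite /blk !nth_take ?ltn_mod // !nth_drop -divn_eq.
Qed.

Lemma nth_ffun_inj (T : Type) (x0 : T) h (b b' : seq T) :
  size b = h -> size b' = h ->
  [ffun m : 'I_h => nth x0 b m] = [ffun m : 'I_h => nth x0 b' m] -> b = b'.
Proof.
move=> sb sb' /ffunP eq_nth; apply: (eq_from_nth (x0 := x0)); first by rewrite sb sb'.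
by move=> m; rewrite sb => lt_m; have := eq_nth (Ordinal lt_m); rewrite !ffunE.
Qed.

Section Classes.
Variables (n k d L : nat) (I : 'I_L -> ((k * d) %/ 2).-tuple 'I_n).
Variable pi : 'I_L -> 'S_((k * d) %/ 2).

Lemma par_rel_class (sigma : 'I_L -> 'S_((k * d) %/ 2)) C x y :
  C \in Par I pi sigma -> x \in C -> y \in C -> par_rel I pi sigma x y.
Proof. by case/imsetP => z _ ->; rewrite !inE; apply: upair_eq_trans. Qed.

(* If sigma1, sigma2 induce the same partition, then within a class the
   B-block at one index determines the B-blocks at all others: the A-blocks do
   not depend on sigma and B_x is the partner of A_x in the common pair. *)
Lemma Bblk_class (sigma1 sigma2 : 'I_L -> 'S_((k * d) %/ 2)) C x y :
  Par I pi sigma1 = Par I pi sigma2 -> C \in Par I pi sigma1 ->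
  x \in C -> y \in C ->
  Bblk I sigma1 y = Bblk I sigma2 y -> Bblk I sigma1 x = Bblk I sigma2 x.
Proof.
move=> samePar C1 xC yC eqBy.
have rel1 := par_rel_class C1 xC yC.
have rel2 : par_rel I pi sigma2 x y by apply: par_rel_class xC yC; rewrite -samePar.
rewrite /par_rel -/(upair_eq _ _) eqBy in rel1.
exact: upair_eq_other rel1 rel2.
Qed.
End Classes.

Definition pword n q (T : q.-tuple 'I_n) (p : 'S_q) : {ffun 'I_q -> 'I_n} :=
  [ffun i => tnth T (p i)].

Section Counting.
Variables (n k d L : nat).
Hypotheses (n_gt0 : 0 < n) (L_gt0 : 0 < L) (d_gt0 : 0 < d) (k_even : ~~ odd k).
Local Notation q := ((k * d) %/ 2).
Local Notation h := (k %/ 2).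
Variables (I : 'I_L -> q.-tuple 'I_n) (Q : {set {set 'I_L * 'I_d}}).
Hypothesis Q_partition : partition Q [set: 'I_L * 'I_d].
Let x0 : 'I_n := Ordinal n_gt0.

Definition words (sigma : {ffun 'I_L -> 'S_q}) : {ffun 'I_L -> {ffun 'I_q -> 'I_n}} :=
  [ffun j => pword (I (ordS j)) (sigma j)].

Definition wblk (w : {ffun 'I_L -> {ffun 'I_q -> 'I_n}}) (x : 'I_L * 'I_d) :=
  blk h (fgraph (w x.1)) x.2.

Lemma Bblk_words (sigma : {ffun 'I_L -> 'S_q}) x :
  Bblk I sigma x = wblk (words sigma) x.
Proof.
rewrite /Bblk /wblk /permt -codom_ffun codomE; congr blk.
by apply: eq_map => i; rewrite !ffunE.
Qed.

Lemma q_blocks : q = d * h.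
Proof. by rewrite muln_divA ?dvdn2 // mulnC. Qed.

Lemma size_wblk w x : size (wblk w x) = h.
Proof.
rewrite /wblk size_takel // size_drop size_tuple card_ord q_blocks -mulnBl.
by rewrite leq_pmull // subn_gt0.
Qed.

Lemma wblk_inj w1 w2 : (forall x, wblk w1 x = wblk w2 x) -> w1 = w2.
Proof.
move=> eq_blk; apply/ffunP => j; apply: (can_inj fgraphK).
apply: val_inj; apply: (blk_ext x0 (h := h) (d := d)).
- by rewrite size_tuple card_ord q_blocks.
- by rewrite size_tuple card_ord q_blocks.
by move=> s lt_s; apply: (eq_blk (j, Ordinal lt_s)).
Qed.

Lemma wblk_words_sub (sigma : {ffun 'I_L -> 'S_q}) x :
  {subset wblk (words sigma) x <= I (ordS x.1)}.
Proof.
move=> v /mem_take/mem_drop; rewrite -codom_ffun => /codomP [i ->].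
by rewrite !ffunE mem_tnth.
Qed.

(* Fixing the words fixes each sigma_j up to the permutations of positions
   preserving I_{j+1}: at most prod_j hist(I_j)! choices. *)
Lemma card_words_fibre w :
  #|[set sigma | words sigma == w]| <= \prod_(j < L) histfact (I j).
Proof.
have -> : #|[set sigma | words sigma == w]| =
    #|family (fun j => [set p : 'S_q | pword (I (ordS j)) p == w j])|.
  apply: eq_card => sigma; rewrite inE; apply/eqP/familyP => [<- j | fam].
    by rewrite inE ffunE.
  by apply/ffunP => j; rewrite ffunE; move: (fam j); rewrite inE => /eqP.
rewrite card_family /image_mem foldrE big_map big_enum /=.
rewrite [X in _ <= X](reindex_inj (@ordS_inj _)).
by apply: leq_prod => j _; rewrite histfactE; apply: card_perm_fibre.
Qed.

Definition sigmas_of_Q :=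
  [set sigma : {ffun 'I_L -> 'S_q} | Par I (@idperms L q) sigma == Q].

Definition rep (c : 'I_#|Q|) : 'I_L * 'I_d :=
  odflt (Ordinal L_gt0, Ordinal d_gt0) [pick x in enum_val c].

Lemma rep_mem c : rep c \in enum_val c.
Proof.
rewrite /rep; case: pickP => [x -> // | no_elt].
have /and3P [_ _ no_set0] := Q_partition.
have : enum_val c != set0 by apply: contraNneq no_set0 => <-; apply: enum_valP.
by case/set0Pn => x; rewrite no_elt.
Qed.

Definition code w : {ffun 'I_#|Q| -> {ffun 'I_h -> 'I_n}} :=
  [ffun c => [ffun m : 'I_h => nth x0 (wblk w (rep c)) m]].

(* On realisations of Q the code determines the words: the B-block at the
   representative determines the B-blocks of the whole class. *)
Lemma code_inj : {in words @: sigmas_of_Q &, injective code}.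
Proof.
move=> _ _ /imsetP [s1 S1 ->] /imsetP [s2 S2 ->] eq_code.
move: S1 S2; rewrite !inE => /eqP Par1 /eqP Par2.
apply: wblk_inj => x.
have /and3P [/eqP coverQ _ _] := Q_partition.
have xQ : x \in cover Q by rewrite coverQ inE.
have CQ := pblock_mem xQ.
pose c := enum_rank_in CQ (pblock Q x).
have cE : enum_val c = pblock Q x by rewrite enum_rankK_in.
have eq_rep : wblk (words s1) (rep c) = wblk (words s2) (rep c).
  apply: (@nth_ffun_inj _ x0 h); rewrite ?size_wblk //.
  by move/ffunP/(_ c): eq_code; rewrite !ffunE.
rewrite -!Bblk_words in eq_rep *.
have C1 : pblock Q x \in Par I (@idperms L q) s1 by rewrite Par1.
apply: (Bblk_class _ C1 _ _ eq_rep); first by rewrite Par1 Par2.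
  by rewrite mem_pblock.
by rewrite -cE rep_mem.
Qed.

(* Each class contributes at most q^h choices of B-block, since the entries of
   the block are letters of a tuple of length q. *)
Lemma card_words_image : #|words @: sigmas_of_Q| <= q ^ (h * #|Q|).
Proof.
rewrite -(card_in_imset code_inj).
have code_range : code @: (words @: sigmas_of_Q) \subset
    family (fun c => ffun_on (mem (I (ordS (rep c).1)))).
  apply/subsetP => _ /imsetP [_ /imsetP [sigma _ ->] ->]; apply/familyP => c.
  apply/ffun_onP => m; rewrite !ffunE; apply: wblk_words_sub.
  by apply: mem_nth; rewrite size_wblk.
apply: leq_trans (subset_leq_card code_range) _.
have -> : q ^ (h * #|Q|) = \prod_(c : 'I_#|Q|) q ^ h.
  by rewrite prod_nat_const card_ord -expnM.
rewrite card_family /image_mem foldrE big_map big_enum /=.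
apply: leq_prod => c _; rewrite card_ffun_on card_ord.
have [-> // | h_gt0] := posnP h.
by rewrite leq_exp2r // (leq_trans (card_size _)) ?size_tuple.
Qed.
End Counting.

Theorem claim2 (n d l k : nat) (hn : 0 < n) (hd : 0 < d) (hl : 0 < l)
  (hk : 0 < k) (hkeven : ~~ odd k)
  (Q : {set {set 'I_(2 * l) * 'I_d}})
  (hQ : partition Q [set: 'I_(2 * l) * 'I_d])
  (I : 'I_(2 * l) -> ((k * d) %/ 2).-tuple 'I_n)
  (hI : Qvalid Q I) :
  #|[set sigma : {ffun 'I_(2 * l) -> 'S_((k * d) %/ 2)} |
       Par I (@idperms (2 * l) _) sigma == Q]|
  <= ((k * d) %/ 2) ^ ((k * #|Q|) %/ 2) * \prod_(j < 2 * l) histfact (I j).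
Proof.
have L_gt0 : 0 < 2 * l by rewrite muln_gt0.
have -> : (k * #|Q|) %/ 2 = k %/ 2 * #|Q|.
  by rewrite [RHS]mulnC muln_divA ?dvdn2 // mulnC.
have fibre_le w : #|[set sigma in sigmas_of_Q I Q | words I sigma == w]|
    <= \prod_(j < 2 * l) histfact (I j).
  apply: leq_trans (card_words_fibre I w); apply: subset_leq_card.
  by apply/subsetP => sigma; rewrite !inE => /andP [].
apply: leq_trans (card_le_image_fibre fibre_le) _.
by rewrite leq_mul2r (card_words_image hn L_gt0 hd hkeven I hQ) orbT.
Qed.
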